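(* Let $0<\beta_1<\beta_2$. There is a unique $a=a(\beta_1,\beta_2)\in(0,1/\beta_1)$ satisfying $a\beta_1-1+(a\beta_2+1)e^{-a(\beta_1+\beta_2)}=0$. Moreover, for every $c\in(0,1)$, the limit $\lim a(\beta_1,\beta_2)\,\beta_1$, taken as $\beta_1/\beta_2\to c$ and $\beta_2\to0$, exists and lies in $(0,1)$. *)

From Stdlib Require Import Reals Lra.
Open Scope R_scope.

Definition root_eq (b1 b2 a : R) : Prop :=
  a * b1 - 1 + (a * b2 + 1) * exp (- (a * (b1 + b2))) = 0.

(* In the variables x = a*b1 and r = b2/b1 > 1 the equation reads
   F r x := x - 1 + (1 + r x) e^{-(1+r) x} = 0 ([scaled_eq]), and for 0 <= x < 1
   F r x = (1 - x) (e^{-H r x} - 1) with H r x = (1+r) x + ln (1-x) - ln (1+r x)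
   ([log_scaled_eq]).
   H r vanishes at 0, increases up to 1 - 1/r and then decreases, and F r 1 > 0,
   so there is exactly one root in (0, 1), where H r changes sign.  Since
   |H r x - H s x| <= |r - s|, the sign change persists under small changes of r,
   so the root is continuous in r; the limit is the root for r = 1/c. *)
From Stdlib Require Import Reals Lra.
From Coquelicot Require Import Coquelicot.
Open Scope R_scope.

Definition scaled_eq (r x : R) : R := x - 1 + (1 + r * x) * exp (- ((1 + r) * x)).

Definition log_scaled_eq (r x : R) : R := (1 + r) * x + ln (1 - x) - ln (1 + r * x).

Definition peak (r : R) : R := 1 - / r.

Lemma lt_of_derivative_pos (f f' : R -> R) (u v : R) :
  u < v -> (forall c, u <= c <= v -> derivable_pt_lim f c (f' c)) ->
  (forall c, u < c < v -> 0 < f' c) -> f u < f v.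
Proof.
  intros Huv Hder Hpos.
  destruct (MVT_cor2 f f' u v Huv Hder) as [c [Hmvt Hc]].
  specialize (Hpos c Hc). nra.
Qed.

Lemma lt_of_derivative_neg (f f' : R -> R) (u v : R) :
  u < v -> (forall c, u <= c <= v -> derivable_pt_lim f c (f' c)) ->
  (forall c, u < c < v -> f' c < 0) -> f v < f u.
Proof.
  intros Huv Hder Hneg.
  destruct (MVT_cor2 f f' u v Huv Hder) as [c [Hmvt Hc]].
  specialize (Hneg c Hc). nra.
Qed.

Lemma ln_le_sub_1 (u : R) : 0 < u -> ln u <= u - 1.
Proof. intros Hu. pose proof (exp_ineq1_le (ln u)). rewrite exp_ln in *; lra. Qed.

Lemma ln_sub_ln_le (u v : R) : 1 <= u <= v -> 0 <= ln v - ln u <= v - u.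
Proof.
  intros Huv. split.
  - pose proof (ln_le u v ltac:(lra) (proj2 Huv)). lra.
  - rewrite <- ln_div by lra.
    pose proof (ln_le_sub_1 (v / u) ltac:(apply Rdiv_lt_0_compat; lra)).
    assert (v / u - 1 <= v - u).
    { replace (v / u - 1) with ((v - u) / u) by (field; lra).
      apply Rmult_le_reg_r with u; [lra|].
      replace ((v - u) / u * u) with (v - u) by (field; lra). nra. }
    lra.
Qed.

Lemma Rinv_eps_delta (c : R) : c <> 0 -> forall e, 0 < e ->
  exists d, 0 < d /\ forall t, Rabs (t - c) < d -> Rabs (/ t - / c) < e.
Proof.
  intros Hc e He.
  destruct (continuity_pt_inv _ _ (continuity_pt_id c) Hc e He) as [d [Hd Hcont]].
  exists d. split; [exact Hd|]. intros t Ht.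
  destruct (Req_dec t c) as [->|Htc].
  - rewrite Rminus_diag, Rabs_R0. exact He.
  - exact (Hcont t (conj (conj I (not_eq_sym Htc)) Ht)).
Qed.

Lemma scaled_eq_continuous (r : R) : continuity (scaled_eq r).
Proof.
  intros x. apply continuity_pt_filterlim, (ex_derive_continuous (scaled_eq r)).
  unfold scaled_eq. auto_derive. exact I.
Qed.

Lemma scaled_eq_exp_form (r x : R) : 0 <= r -> 0 <= x < 1 ->
  scaled_eq r x = (1 - x) * (exp (- log_scaled_eq r x) - 1).
Proof.
  intros Hr Hx. unfold scaled_eq, log_scaled_eq.
  replace (- ((1 + r) * x + ln (1 - x) - ln (1 + r * x)))
    with (- ((1 + r) * x) + - ln (1 - x) + ln (1 + r * x)) by ring.
  rewrite !exp_plus, !exp_Ropp, !exp_ln by nra.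
  pose proof (exp_pos ((1 + r) * x)). field. lra.
Qed.

Lemma scaled_eq_lt0 (r x : R) : 0 <= r -> 0 <= x < 1 ->
  0 < log_scaled_eq r x -> scaled_eq r x < 0.
Proof.
  intros Hr Hx Hpos. rewrite scaled_eq_exp_form by assumption.
  assert (exp (- log_scaled_eq r x) < 1) by (rewrite <- exp_0; apply exp_increasing; lra).
  nra.
Qed.

Lemma scaled_eq0_iff (r x : R) : 0 <= r -> 0 <= x < 1 ->
  scaled_eq r x = 0 <-> log_scaled_eq r x = 0.
Proof.
  intros Hr Hx. rewrite scaled_eq_exp_form by assumption. split.
  - intros Hprod. apply Rmult_integral in Hprod as [|Hexp]; [lra|].
    assert (Hexp0 : exp (- log_scaled_eq r x) = exp 0) by (rewrite exp_0; lra).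
    apply exp_inv in Hexp0. lra.
  - intros ->. rewrite Ropp_0, exp_0. ring.
Qed.

Lemma log_scaled_eq_lipschitz (r s x : R) : 0 <= r -> 0 <= s -> 0 <= x <= 1 ->
  Rabs (log_scaled_eq r x - log_scaled_eq s x) <= Rabs (r - s).
Proof.
  assert (Hle : forall r s, 0 <= s <= r -> 0 <= x <= 1 ->
            0 <= log_scaled_eq r x - log_scaled_eq s x <= r - s).
  { intros r' s' Hsr Hx.
    pose proof (ln_sub_ln_le (1 + s' * x) (1 + r' * x) ltac:(nra)).
    unfold log_scaled_eq. nra. }
  intros Hr Hs Hx. destruct (Rle_dec s r).
  - specialize (Hle r s ltac:(lra) Hx). rewrite !Rabs_right by lra. lra.
  - specialize (Hle s r ltac:(lra) Hx). rewrite !Rabs_left1 by lra. lra.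
Qed.

Section LogScaledEq.

Variable r : R.
Hypothesis r_gt1 : 1 < r.

Let H := log_scaled_eq r.
Let H' (x : R) : R := (1 + r) * r * x * (peak r - x) / ((1 - x) * (1 + r * x)).

Lemma peak_bounds : 0 < peak r < 1.
Proof.
  unfold peak. pose proof (Rinv_lt_contravar 1 r ltac:(lra) r_gt1).
  pose proof (Rinv_0_lt_compat r ltac:(lra)). rewrite Rinv_1 in *. lra.
Qed.

Lemma log_scaled_eq_derivative (x : R) : 0 <= x < 1 ->
  derivable_pt_lim H x (H' x).
Proof.
  intros Hx. apply is_derive_Reals. unfold H, H', log_scaled_eq, peak.
  auto_derive.
  - repeat split; nra.
  - field. repeat split; nra.
Qed.

Lemma log_scaled_eq_increasing (u v : R) : 0 <= u -> u < v -> v <= peak r -> H u < H v.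
Proof.
  intros Hu Huv Hv. pose proof peak_bounds.
  apply lt_of_derivative_pos with (f' := H'); [exact Huv| |].
  - intros c Hc. apply log_scaled_eq_derivative. lra.
  - intros c Hc. unfold H'. apply Rdiv_lt_0_compat.
    + repeat apply Rmult_lt_0_compat; lra.
    + apply Rmult_lt_0_compat; nra.
Qed.

Lemma log_scaled_eq_decreasing (u v : R) : peak r <= u -> u < v -> v < 1 -> H v < H u.
Proof.
  intros Hu Huv Hv. pose proof peak_bounds.
  apply lt_of_derivative_neg with (f' := H'); [exact Huv| |].
  - intros c Hc. apply log_scaled_eq_derivative. lra.
  - intros c Hc. unfold H', Rdiv. apply Rmult_neg_pos.
    + assert (0 < (1 + r) * r * c) by (repeat apply Rmult_lt_0_compat; lra). nra.
    + apply Rinv_0_lt_compat, Rmult_lt_0_compat; nra.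
Qed.

Lemma log_scaled_eq_pos_up_to_peak (x : R) : 0 < x <= peak r -> 0 < H x.
Proof.
  intros Hx. replace 0 with (H 0) at 1.
  - apply log_scaled_eq_increasing; lra.
  - unfold H, log_scaled_eq. rewrite Rmult_0_r, Rmult_0_r, Rminus_0_r, Rplus_0_r, ln_1. ring.
Qed.

Section Root.

Variable x : R.
Hypothesis x_in01 : 0 < x < 1.
Hypothesis x_root : H x = 0.

Lemma root_gt_peak : peak r < x.
Proof.
  destruct (Rlt_le_dec (peak r) x) as [|Hle]; [assumption|].
  pose proof (log_scaled_eq_pos_up_to_peak x (conj (proj1 x_in01) Hle)). lra.
Qed.

Lemma log_scaled_eq_pos_before_root (y : R) : 0 < y < x -> 0 < H y.
Proof.
  intros Hy. pose proof root_gt_peak.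
  destruct (Rle_lt_dec y (peak r)).
  - apply log_scaled_eq_pos_up_to_peak. lra.
  - rewrite <- x_root. apply log_scaled_eq_decreasing; lra.
Qed.

Lemma log_scaled_eq_neg_after_root (y : R) : x < y < 1 -> H y < 0.
Proof.
  intros Hy. pose proof root_gt_peak. rewrite <- x_root.
  apply log_scaled_eq_decreasing; lra.
Qed.

Lemma lt_root_of_log_scaled_eq_pos (y : R) : 0 < y < 1 -> 0 < H y -> y < x.
Proof.
  intros Hy Hpos. destruct (Rtotal_order y x) as [|[->|Hxy]]; [assumption|lra|].
  pose proof (log_scaled_eq_neg_after_root y ltac:(lra)). lra.
Qed.

Lemma gt_root_of_log_scaled_eq_neg (y : R) : 0 < y < 1 -> H y < 0 -> x < y.
Proof.
  intros Hy Hneg. destruct (Rtotal_order y x) as [Hyx|[->|]]; [|lra|assumption].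
  pose proof (log_scaled_eq_pos_before_root y ltac:(lra)). lra.
Qed.

Lemma log_scaled_eq_root_unique (y : R) : 0 < y < 1 -> H y = 0 -> y = x.
Proof.
  intros Hy Hroot. destruct (Rtotal_order y x) as [Hyx|[|Hxy]]; [|assumption|].
  - pose proof (log_scaled_eq_pos_before_root y ltac:(lra)). lra.
  - pose proof (log_scaled_eq_neg_after_root y ltac:(lra)). lra.
Qed.

End Root.

Lemma log_scaled_eq_root_exists : exists x, 0 < x < 1 /\ H x = 0.
Proof.
  pose proof peak_bounds.
  assert (Hpeak : scaled_eq r (peak r) < 0).
  { apply scaled_eq_lt0; [lra|lra|]. apply log_scaled_eq_pos_up_to_peak. lra. }
  assert (Hone : 0 < scaled_eq r 1).
  { unfold scaled_eq. pose proof (exp_pos (- ((1 + r) * 1))). nra. }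
  destruct (IVT (scaled_eq r) (peak r) 1 (scaled_eq_continuous r) (proj2 peak_bounds)
              Hpeak Hone) as [x [Hx Hroot]].
  assert (x <> peak r) by (intros ->; lra).
  assert (x <> 1) by (intros ->; lra).
  exists x. split; [lra|].
  apply (scaled_eq0_iff r x); [lra|lra|exact Hroot].
Qed.

End LogScaledEq.

Lemma log_scaled_eq_root_continuous (r0 L : R) :
  1 < r0 -> 0 < L < 1 -> log_scaled_eq r0 L = 0 ->
  forall eps, 0 < eps -> exists d, 0 < d /\
    forall r x, 1 < r -> Rabs (r - r0) < d -> 0 < x < 1 -> log_scaled_eq r x = 0 ->
    Rabs (x - L) < eps.
Proof.
  intros Hr0 HL Hroot0 eps Heps.
  set (e := Rmin eps (Rmin L (1 - L)) / 2).
  assert (He : 0 < e /\ e < eps /\ e < L /\ e < 1 - L).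
  { pose proof (Rmin_l eps (Rmin L (1 - L))) as Hmin_eps.
    pose proof (Rmin_r eps (Rmin L (1 - L))) as Hmin_L1.
    pose proof (Rmin_l L (1 - L)). pose proof (Rmin_r L (1 - L)).
    pose proof (Rmin_pos eps (Rmin L (1 - L)) Heps (Rmin_pos L (1 - L) ltac:(lra) ltac:(lra))).
    unfold e. lra. }
  set (p := L - e). set (q := L + e).
  assert (Hp : 0 < log_scaled_eq r0 p)
    by (apply (log_scaled_eq_pos_before_root r0 Hr0 L); unfold p; lra).
  assert (Hq : log_scaled_eq r0 q < 0)
    by (apply (log_scaled_eq_neg_after_root r0 Hr0 L); unfold q; lra).
  set (d := Rmin (log_scaled_eq r0 p) (- log_scaled_eq r0 q)).
  assert (Hd_p : d <= log_scaled_eq r0 p) by apply Rmin_l.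
  assert (Hd_q : d <= - log_scaled_eq r0 q) by apply Rmin_r.
  exists d. split; [apply Rmin_pos; lra|].
  intros r x Hr Hrr0 Hx Hroot.
  assert (Hclose : forall y, 0 <= y <= 1 -> Rabs (log_scaled_eq r y - log_scaled_eq r0 y) < d).
  { intros y Hy. eapply Rle_lt_trans; [|exact Hrr0].
    apply log_scaled_eq_lipschitz; lra. }
  assert (Hpx : p < x).
  { apply (lt_root_of_log_scaled_eq_pos r Hr x Hx Hroot); [unfold p; lra|].
    destruct (Rabs_def2 _ _ (Hclose p ltac:(unfold p; lra))). lra. }
  assert (Hxq : x < q).
  { apply (gt_root_of_log_scaled_eq_neg r Hr x Hx Hroot); [unfold q; lra|].
    destruct (Rabs_def2 _ _ (Hclose q ltac:(unfold q; lra))). lra. }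
  apply Rabs_def1; unfold p, q in *; lra.
Qed.

Lemma root_eq_scaled (b1 b2 a : R) : 0 < b1 -> b1 < b2 ->
  (0 < a < 1 / b1) /\ root_eq b1 b2 a <->
  (0 < a * b1 < 1) /\ log_scaled_eq (b2 / b1) (a * b1) = 0.
Proof.
  intros Hb1 Hb12.
  assert (Hbound : 0 < a < 1 / b1 <-> 0 < a * b1 < 1).
  { assert (Hinv : b1 * (1 / b1) = 1) by (field; lra).
    pose proof (Rdiv_lt_0_compat 1 b1 ltac:(lra) Hb1).
    split; intros Ha; split; nra. }
  assert (Heq : root_eq b1 b2 a <-> scaled_eq (b2 / b1) (a * b1) = 0).
  { unfold root_eq, scaled_eq.
    replace (1 + b2 / b1 * (a * b1)) with (a * b2 + 1) by (field; lra).
    replace ((1 + b2 / b1) * (a * b1)) with (a * (b1 + b2)) by (field; lra).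
    reflexivity. }
  assert (Hr : 0 <= b2 / b1) by (apply Rlt_le, Rdiv_lt_0_compat; lra).
  rewrite Hbound, Heq.
  split; intros [Hx Hroot]; split; try exact Hx;
    apply (scaled_eq0_iff (b2 / b1) (a * b1) Hr ltac:(lra)), Hroot.
Qed.

Lemma ratio_gt1 (b1 b2 : R) : 0 < b1 -> b1 < b2 -> 1 < b2 / b1.
Proof.
  intros Hb1 Hb12. replace (b2 / b1) with (1 + (b2 - b1) / b1) by (field; lra).
  pose proof (Rdiv_lt_0_compat (b2 - b1) b1 ltac:(lra) Hb1). lra.
Qed.

Lemma root_eq_exists_unique (b1 b2 : R) : 0 < b1 -> b1 < b2 ->
  exists! a : R, (0 < a /\ a < 1 / b1) /\ root_eq b1 b2 a.
Proof.
  intros Hb1 Hb12. pose proof (ratio_gt1 b1 b2 Hb1 Hb12) as Hr.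
  destruct (log_scaled_eq_root_exists _ Hr) as [x [Hx Hroot]].
  exists (x / b1). split.
  - apply root_eq_scaled; [exact Hb1|exact Hb12|].
    replace (x / b1 * b1) with x by (field; lra). split; assumption.
  - intros a Ha. apply root_eq_scaled in Ha as [Ha Haroot]; [|exact Hb1|exact Hb12].
    rewrite <- (log_scaled_eq_root_unique _ Hr x Hx Hroot (a * b1) Ha Haroot).
    field. lra.
Qed.

Theorem lemma3p1 :
  (forall b1 b2 : R, 0 < b1 -> b1 < b2 ->
     exists! a : R, (0 < a /\ a < 1 / b1) /\ root_eq b1 b2 a) /\
  (forall c : R, 0 < c -> c < 1 ->
     exists L : R, 0 < L /\ L < 1 /\
       forall eps : R, 0 < eps ->
         exists delta : R, 0 < delta /\
           forall b1 b2 a : R, 0 < b1 -> b1 < b2 ->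
             Rabs (b1 / b2 - c) < delta -> b2 < delta ->
             0 < a -> a < 1 / b1 -> root_eq b1 b2 a ->
             Rabs (a * b1 - L) < eps).
Proof.
  split; [exact root_eq_exists_unique|].
  intros c Hc0 Hc1.
  assert (Hr0 : 1 < / c).
  { rewrite <- Rinv_1. apply Rinv_lt_contravar; lra. }
  destruct (log_scaled_eq_root_exists _ Hr0) as [L [HL HLroot]].
  exists L. split; [lra|split; [lra|]].
  intros eps Heps.
  destruct (log_scaled_eq_root_continuous _ _ Hr0 HL HLroot eps Heps) as [d [Hd Hcont]].
  destruct (Rinv_eps_delta c ltac:(lra) d Hd) as [delta [Hdelta Hinv]].
  exists delta. split; [exact Hdelta|].
  (* The root depends on b1 and b2 only through b2 / b1. *)
  intros b1 b2 a Hb1 Hb12 Hratio _ Ha0 Ha1 Hroot.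
  destruct (proj1 (root_eq_scaled b1 b2 a Hb1 Hb12) (conj (conj Ha0 Ha1) Hroot))
    as [Hx Hxroot].
  replace (b2 / b1) with (/ (b1 / b2)) in Hxroot by (field; lra).
  apply (Hcont (/ (b1 / b2))); [|apply Hinv, Hratio|exact Hx|exact Hxroot].
  replace (/ (b1 / b2)) with (b2 / b1) by (field; lra).
  exact (ratio_gt1 b1 b2 Hb1 Hb12).
Qed.
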